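(* Let $p$ be a positive stochastic choice function on a finite set $X$ such that (a) there exist $a,b,c\in X$ with $a\not\simeq_p b$, $b\not\simeq_p c$, $a\not\simeq_p c$, and (b) for every $x\in X$ there exist $y,z\in X$ with $x\bowtie_p y$, $y\bowtie_p z$ and $x\bowtie_p z$. If $p$ satisfies Generalized Independence of Symmetric Alternatives and Consistency of Revealed Similarities, then $p$ is a 3-step Nested Stochastic Choice.
   Context: $\mathscr{A}$ is the collection of nonempty subsets of $X$; $p(x,A)=0$ for $x\notin A$, $\sum_{a\in A}p(a,A)=1$, $p(a,A)>0$ for $a\in A$; $A\cup x=A\cup\{x\}$. $a\sim_p b$ means $\frac{p(a,A)}{p(b,A)}=\frac{p(a,\{a,b\})}{p(b,\{a,b\})}$ for all $A\ni a,b$. Approximate revealed similarity: $a\bowtie_p b$ iff $a\not\sim_p b$ and $\frac{p(a,A)}{p(b,A)}=\frac{p(a,A\cup x)}{p(b,A\cup x)}$ for every $A\in\mathscr{A}$ (containing $a,b$) and every $x\notin A$ with $x\not\sim_p a$ and $x\not\sim_p b$. Write $a\simeq_p b$ iff $a\sim_p b$ or $a\bowtie_p b$. Generalized Independence of Symmetric Alternatives: for any $A\in\mathscr{A}$, $a,b\in A$, $x\notin A$, if ($a\sim_p x$ and $b\sim_p x$) or ($a\bowtie_p x$ and $b\bowtie_p x$) or ($a\not\simeq_p x$ and $b\not\simeq_p x$), then $\frac{p(a,A)}{p(b,A)}=\frac{p(a,A\cup x)}{p(b,A\cup x)}$. Consistency of Revealed Similarities: for any $x,y,x'\in X$ with $x\sim_p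 x'$: $x\bowtie_p y$ iff $x'\bowtie_p y$. 3-step NSC: there exist a partition $X_1,\dots,X_K$ of $X$, for each $k$ a partition $X_k^1,\dots,X_k^{q_k}$ of $X_k$, and functions $u:X\to\mathbb{R}_{++}$, $w:\bigcup_{i}2^{X_i}\to\mathbb{R}_+$, $v:\bigcup_k\bigcup_l 2^{X_k^l}\to\mathbb{R}_+$ with $w(\emptyset)=v(\emptyset)=0$, such that for every $A\in\mathscr{A}$ and $x\in A\cap X_k^j$, $p(x,A)=\frac{u(x)}{\sum_{y\in A\cap X_k^j}u(y)}\cdot\frac{v(A\cap X_k^j)}{\sum_{l=1}^{q_k}v(A\cap X_k^l)}\cdot\frac{w(A\cap X_k)}{\sum_{i=1}^K w(A\cap X_i)}$. *)

From HB Require Import structures.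
From mathcomp Require Import all_boot all_order all_algebra.
From mathcomp Require Import reals.
Set Implicit Arguments. Unset Strict Implicit. Unset Printing Implicit Defensive.
Import Order.TTheory GRing.Theory Num.Theory.
Local Open Scope ring_scope.

Section Defs.
Variables (R : realType) (X : finType).

Definition stochastic_choice (p : X -> {set X} -> R) : Prop :=
  forall A : {set X}, A != set0 ->
    (forall x, x \notin A -> p x A = 0) /\
    (\sum_(a in A) p a A = 1) /\
    (forall a, a \in A -> 0 < p a A).

Definition rsim (p : X -> {set X} -> R) (a b : X) : Prop :=
  forall A : {set X}, a \in A -> b \in A ->
    p a A / p b A = p a [set a; b] / p b [set a; b].

Definition rbowtie (p : X -> {set X} -> R) (a b : X) : Prop :=
  ~ rsim p a b /\
  forall (A : {set X}) (x : X), a \in A -> b \in A -> x \notin A ->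
    ~ rsim p x a -> ~ rsim p x b ->
    p a A / p b A = p a (x |: A) / p b (x |: A).

Definition rsimeq (p : X -> {set X} -> R) (a b : X) : Prop :=
  rsim p a b \/ rbowtie p a b.

Definition GISA (p : X -> {set X} -> R) : Prop :=
  forall (A : {set X}) (a b x : X), a \in A -> b \in A -> x \notin A ->
    ((rsim p a x /\ rsim p b x) \/ (rbowtie p a x /\ rbowtie p b x)
     \/ (~ rsimeq p a x /\ ~ rsimeq p b x)) ->
    p a A / p b A = p a (x |: A) / p b (x |: A).

Definition CRS (p : X -> {set X} -> R) : Prop :=
  forall x y x' : X, rsim p x x' -> (rbowtie p x y <-> rbowtie p x' y).

(* The functions w, v are total on
   {set X}; only their values on subsets of blocks matter. *)
Definition NSC3 (p : X -> {set X} -> R) : Prop :=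
  exists (P : {set {set X}}) (Q : {set X} -> {set {set X}})
         (u : X -> R) (w v : {set X} -> R),
    partition P [set: X] /\
    (forall B, B \in P -> partition (Q B) B) /\
    (forall x, 0 < u x) /\
    (forall S, 0 <= w S) /\ (forall S, 0 <= v S) /\
    w set0 = 0 /\ v set0 = 0 /\
    forall (A : {set X}) (x : X), A != set0 -> x \in A ->
      let Xk := pblock P x in
      let Xkj := pblock (Q Xk) x in
      p x A =
        (u x / \sum_(y in A :&: Xkj) u y) *
        (v (A :&: Xkj) / \sum_(B in Q Xk) v (A :&: B)) *
        (w (A :&: Xk) / \sum_(B in P) w (A :&: B)).

End Defs.

From HB Require Import structures.
From mathcomp Require Import all_boot all_order all_algebra.
From mathcomp Require Import reals.
From mathcomp Require Import boolp ring.
Import Order.TTheory GRing.Theory Num.Theory.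
Set Implicit Arguments. Unset Strict Implicit. Unset Printing Implicit Defensive.
Local Open Scope ring_scope.

(* Revealed similarity [~] and approximate similarity [≃] are equivalence relations
   (transitivity of [≃] across two bowties is where GISA and CRS enter); the
   [≃]-classes are the nests X_k and the [~]-classes inside them the nests X_k^j.
   GISA says that adding an alternative unrelated to [a] and [b] does not move
   p(a,A)/p(b,A), so on a union W of classes the choice probabilities in a menu
   that only adds unrelated alternatives are proportional to those in W.  Hence the
   odds of two classes S, T measured in the menu S ∪ T are their odds in every such
   larger menu, and these odds form a cocycle.  With three mutually unrelated classes
   a cocycle is a ratio of Luce weights; this gives w on [≃]-classes and, block by
   block, v on [~]-classes.  Each factor of the nested formula then telescopes to a
   ratio of choice masses: p(x,A)/P(A∩X_k^j), P(A∩X_k^j)/P(A∩X_k) and P(A∩X_k). *)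

Section LuceWeights.
Variables (R : numFieldType) (X : finType) (E : rel X) (D : {set X}).
Hypotheses (E_refl : reflexive E) (E_sym : symmetric E) (E_trans : transitive E).
Implicit Types S T V : {set X}.

Definition homog (S : {set X}) :=
  [/\ S != set0, S \subset D & {in S &, forall s t, E s t}].

Definition apart S T := {in S & T, forall s t, ~~ E s t}.

Definition represents (G : {set X} -> {set X} -> R) (w : {set X} -> R) :=
  [/\ w set0 = 0, forall S, 0 <= w S, forall S, homog S -> 0 < w S &
      forall S T, homog S -> homog T -> apart S T -> G S T = w S / w T].

Lemma homog_set1 x : x \in D -> homog [set x].
Proof.
move=> Dx; split; first by apply/set0Pn; exists x; rewrite inE.
  by rewrite sub1set.
by move=> s t /set1P-> /set1P->.
Qed.

Lemma apart_sym S T : apart S T -> apart T S.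
Proof. by move=> ST t s tT sS; rewrite E_sym; apply: ST. Qed.

Lemma apart_set1 S x : ~~ [exists s in S, E s x] -> apart S [set x].
Proof. by move=> /exists_inPn Sx s t sS /set1P->; apply: Sx. Qed.

Lemma apart_set11 x y : ~~ E x y -> apart [set x] [set y].
Proof. by move=> nExy s t /set1P-> /set1P->. Qed.

Lemma homog_meet S x : homog S -> [exists s in S, E s x] -> {in S, forall s, E s x}.
Proof.
by case=> _ _ ES /exists_inP[s0 s0S Es0x] s sS; apply: E_trans (ES _ _ sS s0S) Es0x.
Qed.

Lemma apart_of_class S x y : {in S, forall s, E s x} -> ~~ E x y -> apart S [set y].
Proof.
move=> Sx nExy s t sS /set1P->; apply: contra nExy => Esy.
by apply: E_trans Esy; rewrite E_sym Sx.
Qed.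

Variables (G : {set X} -> {set X} -> R) (a b c : X).
Hypotheses (Da : a \in D) (Db : b \in D) (Dc : c \in D).
Hypotheses (nEab : ~~ E a b) (nEbc : ~~ E b c) (nEac : ~~ E a c).
Hypotheses (G_ge0 : forall S T, 0 <= G S T) (G_set0 : forall T, G set0 T = 0).
Hypothesis G_inv : forall S T, homog S -> homog T -> apart S T -> G S T * G T S = 1.
Hypothesis G_cocycle : forall S T V, homog S -> homog T -> homog V ->
  apart S T -> apart T V -> apart S V -> G S T = G S V * G V T.

(* The weight of a class is read off against the class of [a]; the class of [a]
   itself is measured against [b]. *)
Definition luce_weight S :=
  if [exists s in S, E s a] then G S [set b] * G [set b] [set a] else G S [set a].

Lemma G_neq0 S T : homog S -> homog T -> apart S T -> G S T != 0.
Proof.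
move=> hS hT ST; apply/eqP => G0.
by have /eqP := G_inv hS hT ST; rewrite G0 mul0r eq_sym oner_eq0.
Qed.

Lemma G_gt0 S T : homog S -> homog T -> apart S T -> 0 < G S T.
Proof. by move=> hS hT ST; rewrite lt_def G_neq0 ?G_ge0. Qed.

Lemma G_swap S T : homog S -> homog T -> apart S T -> G T S = (G S T)^-1.
Proof.
move=> hS hT ST; apply: (mulfI (G_neq0 hS hT ST)).
by rewrite G_inv // divff // G_neq0.
Qed.

Let ha := homog_set1 Da.
Let hb := homog_set1 Db.
Let hc := homog_set1 Dc.
Let ba := apart_sym (apart_set11 nEab).
Let bc := apart_set11 nEbc.
Let ac := apart_set11 nEac.
Let cb := apart_sym bc.
Let ca := apart_sym ac.

Lemma luce_weight_set0 : luce_weight set0 = 0.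
Proof.
by rewrite /luce_weight; case: exists_inP => [[s]|_]; rewrite ?inE ?G_set0.
Qed.

Lemma luce_weight_ge0 S : 0 <= luce_weight S.
Proof. by rewrite /luce_weight; case: ifP => _; rewrite ?mulr_ge0. Qed.

Lemma luce_weight_gt0 S : homog S -> 0 < luce_weight S.
Proof.
move=> hS; rewrite /luce_weight; case: ifPn => Sa; last exact: G_gt0 (apart_set1 Sa).
have Sb := apart_of_class (homog_meet hS Sa) nEab.
by apply: mulr_gt0; apply: G_gt0.
Qed.

Lemma luce_weight_ratio_off_a S T : homog S -> homog T -> apart S T ->
  ~~ [exists t in T, E t a] -> G S T = luce_weight S / luce_weight T.
Proof.
move=> hS hT ST /[dup] Ta /apart_set1 Ta'.
rewrite /luce_weight (negbTE Ta) -(G_swap hT ha Ta').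
case: ifPn => [/(homog_meet hS) Sa | /apart_set1 Sa']; last exact: G_cocycle.
have Sb := apart_of_class Sa nEab; have Sc := apart_of_class Sa nEac.
case: (boolP [exists t in T, E t b]) => [/(homog_meet hT) Tb | /apart_set1 Tb'].
  have Tc := apart_of_class Tb nEbc; have cT := apart_sym Tc.
  rewrite (G_cocycle hS hT hc) // (G_cocycle hS hc hb) // (G_cocycle hc hT ha) //.
  by rewrite (G_cocycle hb ha hc) // !mulrA.
rewrite (G_cocycle hS hT hb) // (G_cocycle hb hT ha) ?mulrA //.
exact: apart_sym.
Qed.

Lemma luce_represents : represents G luce_weight.
Proof.
split; [exact: luce_weight_set0 | exact: luce_weight_ge0 | exact: luce_weight_gt0|].
move=> S T hS hT ST.
case: (boolP [exists t in T, E t a]) => Ta; last exact: luce_weight_ratio_off_a.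
have Sa : ~~ [exists s in S, E s a].
  apply/exists_inPn => s sS; have /exists_inP[t tT Eta] := Ta.
  by apply: contra (ST s t sS tT) => Esa; apply: E_trans Esa _; rewrite E_sym.
rewrite (G_swap hT hS (apart_sym ST)).
by rewrite (luce_weight_ratio_off_a hT hS (apart_sym ST) Sa) invf_div.
Qed.

End LuceWeights.

Section RevealedSimilarity.
Variables (R : realType) (X : finType) (p : X -> {set X} -> R).
Implicit Types (A B C S T U V W : {set X}) (a b c x y : X).

Lemma rsim_sym a b : rsim p a b -> rsim p b a.
Proof.
move=> ab A bA aA; rewrite setUC.
by rewrite -[LHS]invf_div (ab A aA bA) invf_div.
Qed.

Lemma rbowtie_sym a b : rbowtie p a b -> rbowtie p b a.
Proof.
case=> nab ab; split=> [/rsim_sym // | A x bA aA xA nxb nxa].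
by rewrite -[LHS]invf_div (ab A x aA bA xA nxa nxb) invf_div.
Qed.

Lemma rsimeq_sym a b : rsimeq p a b -> rsimeq p b a.
Proof. by case=> [/rsim_sym | /rbowtie_sym]; [left | right]. Qed.

Definition ratio_unaffected a b x := forall C, a \in C -> b \in C -> x \notin C ->
  p a C / p b C = p a (x |: C) / p b (x |: C).

Lemma ratio_unaffected_setU1 a b x C : ratio_unaffected a b x ->
  a \in C -> b \in C -> p a C / p b C = p a (x |: C) / p b (x |: C).
Proof.
move=> abx aC bC; case: (boolP (x \in C)) => xC; last exact: abx.
by have /setUidPr -> : [set x] \subset C by rewrite sub1set.
Qed.

Lemma ratio_unaffected_of_simeq a b x : rsimeq p a b ->
  ~ rsim p a x -> ~ rsim p b x -> ratio_unaffected a b x.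
Proof.
case=> [ab | [_ ab]] nax nbx C aC bC xC.
  by rewrite (ab C aC bC) (ab (x |: C)) // setU1r.
by apply: ab => // /rsim_sym.
Qed.

Lemma ratio_setU_seq a b B s : a \in B -> b \in B ->
  {in s, forall x, ratio_unaffected a b x} ->
  p a (B :|: [set:: s]) / p b (B :|: [set:: s]) = p a B / p b B.
Proof.
move=> aB bB; elim: s => [|x s IH] abs; first by rewrite set_nil setU0.
rewrite set_cons setUCA -ratio_unaffected_setU1 ?inE ?aB ?bB //; last exact/abs/mem_head.
by apply: IH => y ys; apply/abs; rewrite inE ys orbT.
Qed.

Lemma ratio_restrict a b A B : B \subset A -> a \in B -> b \in B ->
  {in A :\: B, forall x, ratio_unaffected a b x} ->
  p a A / p b A = p a B / p b B.
Proof.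
move=> BA aB bB abAB.
have -> : A = B :|: [set:: enum (A :\: B)].
  apply/setP => y; rewrite set_enum !inE.
  by case: (boolP (y \in B)) => [/(subsetP BA) | _].
by apply: ratio_setU_seq => // x; rewrite mem_enum; apply: abAB.
Qed.

Definition ratios_unaffected W U := forall s t x,
  s \in W -> t \in W -> x \in U :\: W -> ratio_unaffected s t x.

Lemma ratios_unaffected_of_sim W U : {in W &, forall s t, rsimeq p s t} ->
  {in W & U :\: W, forall s x, ~ rsim p s x} -> ratios_unaffected W U.
Proof.
by move=> WW WU s t x sW tW xUW; apply: ratio_unaffected_of_simeq; [apply: WW|apply: WU..].
Qed.

Section GISA.
Hypothesis HG : GISA p.

Lemma ratio_unaffected_sim a b x : rsim p a x -> rsim p b x -> ratio_unaffected a b x.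
Proof. by move=> ax bx C aC bC xC; apply: HG => //; left. Qed.

Lemma ratio_unaffected_bowtie a b x :
  rbowtie p a x -> rbowtie p b x -> ratio_unaffected a b x.
Proof. by move=> ax bx C aC bC xC; apply: HG => //; right; left. Qed.

Lemma ratio_unaffected_nsimeq a b x :
  ~ rsimeq p a x -> ~ rsimeq p b x -> ratio_unaffected a b x.
Proof. by move=> ax bx C aC bC xC; apply: HG => //; right; right. Qed.

Lemma ratios_unaffected_of_simeq W U :
  {in W & U :\: W, forall s x, ~ rsimeq p s x} -> ratios_unaffected W U.
Proof. by move=> WU s t x sW tW xUW; apply: ratio_unaffected_nsimeq; apply: WU. Qed.

End GISA.

Section StochasticChoice.
Hypothesis Hsc : stochastic_choice p.

Lemma p_gt0 x A : x \in A -> 0 < p x A.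
Proof.
move=> xA; have A0 : A != set0 by apply/set0Pn; exists x.
by have [_ [_ ->]] := Hsc A0.
Qed.

Lemma p_neq0 x A : x \in A -> p x A != 0.
Proof. by move=> xA; rewrite gt_eqF // p_gt0. Qed.

Lemma p_ge0 x A : A != set0 -> 0 <= p x A.
Proof.
move=> A0; have [pout [_ pin]] := Hsc A0.
by case: (boolP (x \in A)) => xA; [rewrite ltW // pin | rewrite pout].
Qed.

Lemma ratio_chain a b y C : y \in C ->
  p a C / p b C = p a C / p y C * (p y C / p b C).
Proof. by move=> yC; rewrite mulrA divfK // p_neq0. Qed.

Lemma rsim_refl a : rsim p a a.
Proof. by move=> A aA _; rewrite !divff // p_neq0 // !inE eqxx. Qed.

Definition pmass S A := \sum_(y in S) p y A.

Lemma pmass_set0 A : pmass set0 A = 0.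
Proof. exact: big_set0. Qed.

Lemma pmass_ge0 S A : S \subset A -> 0 <= pmass S A.
Proof.
move=> SA; apply: sumr_ge0 => y yS; apply: p_ge0.
by apply/set0Pn; exists y; apply: (subsetP SA).
Qed.

Lemma pmass_gt0 S A : S \subset A -> S != set0 -> 0 < pmass S A.
Proof.
move=> SA /set0Pn[y yS]; rewrite /pmass (bigD1 y) //= ltr_wpDr ?p_gt0 ?(subsetP SA) //.
by apply: sumr_ge0 => z /andP[zS _]; apply: p_ge0; apply/set0Pn; exists z; apply: (subsetP SA).
Qed.

Lemma pmass_setIl S A : A != set0 -> pmass (A :&: S) A = pmass S A.
Proof.
move=> A0; have [pout _] := Hsc A0.
rewrite /pmass [RHS](bigID [in A]) /= [X in _ = _ + X]big1 ?addr0.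
  by apply: eq_bigl => y; rewrite inE andbC.
by move=> y /andP[_ yA]; apply: pout.
Qed.

Lemma pmass_partition P D A : partition P D -> \sum_(C in P) pmass C A = pmass D A.
Proof. by move=> PD; rewrite /pmass (set_partition_big _ PD). Qed.

Lemma pmass_ratio_restrict W U S T : W \subset U -> ratios_unaffected W U ->
  S \subset W -> T \subset W -> pmass S U / pmass T U = pmass S W / pmass T W.
Proof.
move=> WU uWU SW TW; have [W0 | [t0 t0W]] := set_0Vmem W.
  by move: SW; rewrite W0 subset0 => /eqP->; rewrite !pmass_set0 !mul0r.
pose k := p t0 U / p t0 W.
have pUW s : s \in W -> p s U = k * p s W.
  move=> sW; have t0U := subsetP WU _ t0W.
  rewrite -[p s U](divfK (p_neq0 t0U)) (ratio_restrict WU sW t0W) => [|x]; last exact: uWU.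
  by rewrite mulrAC [RHS]mulrAC [p s W * _]mulrC.
have mUW V : V \subset W -> pmass V U = k * pmass V W.
  by move=> VW; rewrite /pmass mulr_sumr; apply: eq_bigr => y /(subsetP VW) /pUW.
have k0 : k != 0 by rewrite mulf_neq0 ?invr_eq0 ?p_neq0 // (subsetP WU).
by rewrite !mUW // -mulf_div divff // mul1r.
Qed.

Definition odds S T := pmass S (S :|: T) / pmass T (S :|: T).

Lemma odds_ge0 S T : 0 <= odds S T.
Proof. by rewrite divr_ge0 // pmass_ge0 // (subsetUl, subsetUr). Qed.

Lemma odds_set0 T : odds set0 T = 0.
Proof. by rewrite /odds pmass_set0 mul0r. Qed.

Lemma odds_inv S T : S != set0 -> T != set0 -> odds S T * odds T S = 1.
Proof.
move=> S0 T0; rewrite /odds (setUC T S) mulrA divfK ?divff //.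
  by rewrite gt_eqF // pmass_gt0 // subsetUl.
by rewrite gt_eqF // pmass_gt0 // subsetUr.
Qed.

Lemma odds_restrict S T U : S :|: T \subset U -> ratios_unaffected (S :|: T) U ->
  odds S T = pmass S U / pmass T U.
Proof. by move=> STU uSTU; rewrite (pmass_ratio_restrict STU uSTU) ?(subsetUl, subsetUr). Qed.

Lemma odds_cocycle S T V U : S \subset U -> T \subset U -> V \subset U -> V != set0 ->
  ratios_unaffected (S :|: T) U -> ratios_unaffected (S :|: V) U ->
  ratios_unaffected (V :|: T) U -> odds S T = odds S V * odds V T.
Proof.
move=> SU TU VU V0 uST uSV uVT.
rewrite !(odds_restrict (U := U)) ?subUset ?SU ?TU ?VU // mulrA divfK //.
by rewrite gt_eqF // pmass_gt0.
Qed.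

End StochasticChoice.

Section Transitivity.
Hypotheses (Hsc : stochastic_choice p) (HG : GISA p) (HC : CRS p).

Lemma rsim_trans a b c : rsim p a b -> rsim p b c -> rsim p a c.
Proof.
move=> ab bc.
have acE C : a \in C -> c \in C -> p a C / p c C =
    p a [set a; b] / p b [set a; b] * (p b [set b; c] / p c [set b; c]).
  move=> aC cC; have bC : b \in b |: C := setU11 b C.
  rewrite (@ratio_unaffected_setU1 _ _ b) //; last exact: ratio_unaffected_sim (rsim_sym bc).
  by rewrite (ratio_chain Hsc _ _ bC) (ab _ (setU1r _ aC) bC) (bc _ bC (setU1r _ cC)).
by move=> A aA cA; rewrite !acE // !inE eqxx ?orbT.
Qed.

Lemma rsim_rbowtie a b c : rsim p a b -> rbowtie p b c -> rbowtie p a c.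
Proof. by move=> ab; apply: (proj1 (HC c (rsim_sym ab))). Qed.

Lemma rbowtie_rsim a b c : rbowtie p a b -> rsim p b c -> rbowtie p a c.
Proof. by move=> ab bc; apply/rbowtie_sym/(rsim_rbowtie (rsim_sym bc))/rbowtie_sym. Qed.

Lemma rbowtie_trans a b c : rbowtie p a b -> rbowtie p b c -> rsimeq p a c.
Proof.
move=> ab bc; case: (EM (rsim p a c)) => [|nac]; [by left | right].
split=> // A x aA cA xA nxa nxc.
case: (EM (rsim p x b)) => [xb | nxb].
  apply: ratio_unaffected_bowtie => //; apply: (rbowtie_rsim _ (rsim_sym xb)) => //.
  exact: rbowtie_sym.
(* [b] is invisible to the ratio of [a] and [c], so insert it and split the ratio at [b]. *)
have ubAC := ratio_unaffected_setU1 (ratio_unaffected_bowtie HG ab (rbowtie_sym bc)).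
have bA : b \in b |: A := setU11 b A.
have [abA cbA] : a \in b |: A /\ c \in b |: A by rewrite !setU1r.
have xbA : x \notin b |: A.
  by rewrite in_setU1 negb_or xA andbT; apply: contra_notN nxb => /eqP->; apply: rsim_refl.
have bxbA : b \in x |: (b |: A) by rewrite setU1r.
rewrite ubAC // (ratio_chain Hsc _ _ bA) (ab.2 _ x) // (bc.2 _ x) //.
by rewrite -(ratio_chain Hsc _ _ bxbA) setUCA -ubAC ?setU1r.
Qed.

Lemma rsimeq_trans a b c : rsimeq p a b -> rsimeq p b c -> rsimeq p a c.
Proof.
case=> [ab | ab] [bc | bc].
- by left; apply: rsim_trans bc.
- by right; apply: rsim_rbowtie bc.
- by right; apply: rbowtie_rsim bc.
- exact: rbowtie_trans bc.
Qed.

End Transitivity.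

End RevealedSimilarity.

Lemma mem_equivalence_class (T : finType) (E : rel T) (D C : {set T}) y z :
  equivalence_rel E -> C \in equivalence_partition E D -> y \in C ->
  (z \in C) = (z \in D) && E y z.
Proof.
move=> eqE /imsetP[x Dx ->]; rewrite !inE => /andP[Dy Exy].
by rewrite (eqE x y z).2.
Qed.

Section Nesting.
Variables (R : realType) (X : finType) (p : X -> {set X} -> R).
Hypothesis Hsc : stochastic_choice p.
Variables (E : rel X) (D : {set X}).
Hypotheses (E_refl : reflexive E) (E_sym : symmetric E) (E_trans : transitive E).
(* [E] is [~] inside one [≃]-block [D], or [≃] on all of [X]; in both cases GISA
   yields [E_unaffected]. *)
Hypothesis D_closed : forall s x, s \in D -> E s x -> x \in D.
Hypothesis E_unaffected : forall W U : {set X}, W \subset D ->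
  {in W & U :\: W, forall s x, ~~ E s x} -> ratios_unaffected p W U.
Implicit Types A C M S T U V W : {set X}.

Local Notation P := (equivalence_partition E D).

Lemma E_equivalence : equivalence_rel E.
Proof. by apply/equivalence_relP; split=> //; apply: sym_left_transitive. Qed.

Lemma ratios_unaffected_apart S T V U : S \subset D -> T \subset D ->
  apart E S V -> apart E T V -> U \subset S :|: T :|: V -> ratios_unaffected p (S :|: T) U.
Proof.
move=> SD TD SV TV USTV; apply: E_unaffected; first by rewrite subUset SD.
move=> s x sST; rewrite inE => /andP[xST /(subsetP USTV)].
rewrite inE (negbTE xST) /= => xV.
by case/setUP: sST => [sS | sT]; [apply: SV | apply: TV].
Qed.

Lemma odds_cocycle_apart S T V : homog E D S -> homog E D T -> homog E D V ->
  apart E S T -> apart E T V -> apart E S V -> odds p S T = odds p S V * odds p V T.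
Proof.
move=> [_ SD _] [_ TD _] [V0 VD _] ST TV SV.
have TS := apart_sym E_sym ST; have VT := apart_sym E_sym TV.
have VS := apart_sym E_sym SV.
apply: (odds_cocycle Hsc (U := S :|: T :|: V)) => //.
- by rewrite -setUA subsetUl.
- by apply/subsetP => y; rewrite !inE => ->; rewrite orbT.
- by rewrite subsetUr.
- by apply: (@ratios_unaffected_apart _ _ V).
- apply: (@ratios_unaffected_apart _ _ T) => //.
  by apply/subsetP => y; rewrite !inE; do !case: (_ \in _).
- apply: (@ratios_unaffected_apart _ _ S) => //.
  by apply/subsetP => y; rewrite !inE; do !case: (_ \in _).
Qed.

Lemma exists_represents a b c : a \in D -> b \in D -> c \in D ->
  ~~ E a b -> ~~ E b c -> ~~ E a c -> exists w, represents E D (odds p) w.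
Proof.
move=> Da Db Dc nEab nEbc nEac; exists (luce_weight E (odds p) a b).
apply: luce_represents Dc nEab nEbc nEac _ _ _ _ => //.
- exact: odds_ge0.
- exact: odds_set0.
- by move=> S T [S0 _ _] [T0 _ _] _; apply: odds_inv.
- exact: odds_cocycle_apart.
Qed.

Lemma partition_classes : partition P D.
Proof. by apply: equivalence_partitionP => x y z _ _ _; apply: E_equivalence. Qed.

Lemma class_subset C : C \in P -> C \subset D.
Proof.
by move=> CP; rewrite -(cover_partition partition_classes) bigcup_sup.
Qed.

Lemma mem_class C y z : C \in P -> y \in C -> (z \in C) = E y z.
Proof.
move=> CP yC; rewrite (mem_equivalence_class _ E_equivalence CP yC).
by apply: andb_idl; apply: D_closed; apply: (subsetP (class_subset CP)).
Qed.

Lemma odds_setI_classes A C M : C \in P -> M \in P ->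
  odds p (A :&: C) (A :&: M) = pmass p (A :&: C) A / pmass p (A :&: M) A.
Proof.
move=> CP MP; apply: odds_restrict => //; first by rewrite subUset !subsetIl.
have ACD C' : C' \in P -> A :&: C' \subset D.
  by move=> C'P; rewrite subIset // (class_subset C'P) orbT.
apply: E_unaffected; first by rewrite subUset !ACD.
move=> s x sW; rewrite !inE => /andP[xW xA]; apply: contra xW => Esx.
by rewrite xA; case/setUP: sW => /setIP[_ sC]; rewrite (mem_class _ _ sC) ?Esx ?orbT.
Qed.

Lemma homog_setI_class A C : C \in P -> A :&: C != set0 -> homog E D (A :&: C).
Proof.
move=> CP AC0; split=> //; first by rewrite subIset // (class_subset CP) orbT.
by move=> s t /setIP[_ sC] /setIP[_ tC]; rewrite -(mem_class _ CP sC).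
Qed.

Lemma apart_setI_classes A C M : C \in P -> M \in P -> C != M ->
  apart E (A :&: C) (A :&: M).
Proof.
move=> CP MP CM s t /setIP[_ sC] /setIP[_ tM]; rewrite -(mem_class _ CP sC).
have [_ tiP _] := and3P partition_classes.
by apply: contra CM => tC; rewrite -(def_pblock tiP CP tC) (def_pblock tiP MP tM).
Qed.

Lemma represents_setI_class w A C M : represents E D (odds p) w ->
  C \in P -> M \in P -> A :&: M != set0 ->
  w (A :&: C) = w (A :&: M) / pmass p (A :&: M) A * pmass p (A :&: C) A.
Proof.
move=> [w0 _ wpos wodds] CP MP AM0.
have mAM : pmass p (A :&: M) A != 0 by rewrite gt_eqF // pmass_gt0 // subsetIl.
have [-> | AC0] := eqVneq (A :&: C) set0; first by rewrite w0 pmass_set0 mulr0.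
have [-> | CM] := eqVneq C M; first by rewrite divfK.
have := wodds _ _ (homog_setI_class CP AC0) (homog_setI_class MP AM0).
rewrite odds_setI_classes // => /(_ (apart_setI_classes CP MP CM)) e.
have wM0 : w (A :&: M) != 0 by rewrite gt_eqF // wpos //; apply: homog_setI_class.
by rewrite -[LHS](divfK wM0) -e mulrAC [RHS]mulrAC [_ * w _]mulrC.
Qed.

Lemma represents_share w A x :
  represents E D (odds p) w -> A != set0 -> x \in A -> x \in D ->
  w (A :&: pblock P x) / \sum_(C in P) w (A :&: C) =
    pmass p (A :&: pblock P x) A / pmass p D A.
Proof.
move=> wP A0 xA xD; set M := pblock P x.
have cover_P := cover_partition partition_classes.
have MP : M \in P by apply: pblock_mem; rewrite cover_P.
have AM0 : A :&: M != set0 by apply/set0Pn; exists x; rewrite inE xA mem_pblock cover_P.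
have wM : 0 < w (A :&: M) by case: wP => _ _ wpos _; apply/wpos/homog_setI_class.
have mM : 0 < pmass p (A :&: M) A by rewrite pmass_gt0 // subsetIl.
rewrite (eq_bigr _ (fun C CP => represents_setI_class wP CP MP AM0)) -mulr_sumr.
under eq_bigr => C _ do rewrite pmass_setIl //.
rewrite (@pmass_partition _ _ p _ _ A partition_classes).
rewrite -{1}[w (A :&: M)](divfK (lt0r_neq0 mM)).
by rewrite -mulf_div divff ?mul1r // mulf_neq0 ?invr_eq0 ?gt_eqF.
Qed.

End Nesting.

(* Pastes block-wise weights into the single weight [v] of the nested formula. *)
Definition glue (R : nmodType) (X : finType) (P : {set {set X}})
  (vB : {set X} -> {set X} -> R) (S : {set X}) :=
  if [pick z in S] is Some z then vB (pblock P z) S else 0.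

Lemma glue_set0 (R : nmodType) (X : finType) P (vB : {set X} -> {set X} -> R) :
  glue P vB set0 = 0.
Proof. by rewrite /glue; case: pickP => // z; rewrite inE. Qed.

Lemma glue_sub (R : nmodType) (X : finType) P (vB : {set X} -> {set X} -> R) (N S : {set X}) :
  trivIset P -> N \in P -> S \subset N -> S != set0 -> glue P vB S = vB N S.
Proof.
move=> tiP NP SN /set0Pn[y yS]; rewrite /glue.
case: pickP => [z zS | /(_ y)]; last by rewrite yS.
by rewrite (def_pblock tiP NP (subsetP SN _ zS)).
Qed.

Section NestedRepresentation.
Variables (R : realType) (X : finType) (p : X -> {set X} -> R).
Hypotheses (Hsc : stochastic_choice p) (HG : GISA p) (HC : CRS p).
Implicit Types A B C M N S T W : {set X}.

Definition simr : rel X := fun x y => `[< rsim p x y >].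
Definition simeqr : rel X := fun x y => `[< rsimeq p x y >].

Lemma simrP x y : reflect (rsim p x y) (simr x y).
Proof. exact: asboolP. Qed.

Lemma simeqrP x y : reflect (rsimeq p x y) (simeqr x y).
Proof. exact: asboolP. Qed.

Lemma simr_refl : reflexive simr.
Proof. by move=> x; apply/simrP/rsim_refl. Qed.

Lemma simr_sym : symmetric simr.
Proof. by move=> x y; apply/simrP/simrP => /rsim_sym. Qed.

Lemma simr_trans : transitive simr.
Proof. by move=> y x z /simrP xy /simrP yz; apply/simrP/(rsim_trans Hsc HG xy yz). Qed.

Lemma simeqr_refl : reflexive simeqr.
Proof. by move=> x; apply/simeqrP; left; apply: rsim_refl. Qed.

Lemma simeqr_sym : symmetric simeqr.
Proof. by move=> x y; apply/simeqrP/simeqrP => /rsimeq_sym. Qed.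

Lemma simeqr_trans : transitive simeqr.
Proof.
by move=> y x z /simeqrP xy /simeqrP yz; apply/simeqrP/(rsimeq_trans Hsc HG HC xy yz).
Qed.

Lemma simr_simeqr x y : simr x y -> simeqr x y.
Proof. by move/simrP => xy; apply/simeqrP; left. Qed.

Definition blocks := equivalence_partition simeqr [set: X].
Definition cells N := equivalence_partition simr N.

Lemma simeqr_unaffected W U : W \subset [set: X] ->
  {in W & U :\: W, forall s x, ~~ simeqr s x} -> ratios_unaffected p W U.
Proof.
move=> _ WU; apply: ratios_unaffected_of_simeq => // s x sW xU /simeqrP.
exact/negP/WU.
Qed.

Lemma mem_block N y z : N \in blocks -> y \in N -> (z \in N) = simeqr y z.
Proof. exact: (mem_class simeqr_refl simeqr_sym simeqr_trans (fun _ _ _ _ => in_setT _)). Qed.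

Lemma block_closed N : N \in blocks -> forall s x, s \in N -> simr s x -> x \in N.
Proof. by move=> NP s x sN /simr_simeqr; rewrite (mem_block _ NP sN). Qed.

Lemma simr_unaffected N : N \in blocks -> forall W U, W \subset N ->
  {in W & U :\: W, forall s x, ~~ simr s x} -> ratios_unaffected p W U.
Proof.
move=> NP W U WN WU; apply: ratios_unaffected_of_sim.
  move=> s t /(subsetP WN) sN /(subsetP WN) tN; apply/simeqrP.
  by rewrite -(mem_block _ NP sN).
by move=> s x sW xU /simrP; apply/negP/WU.
Qed.

Lemma partition_blocks : partition blocks [set: X].
Proof. exact: partition_classes simeqr_refl simeqr_sym simeqr_trans. Qed.

Lemma partition_cells N : partition (cells N) N.
Proof. exact: partition_classes simr_refl simr_sym simr_trans. Qed.

Lemma pblock_blocks x : pblock blocks x \in blocks.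
Proof. by rewrite pblock_mem // (cover_partition partition_blocks). Qed.

Lemma block_weights N : (forall x, exists y z,
    rbowtie p x y /\ rbowtie p y z /\ rbowtie p x z) ->
  exists v, N \in blocks -> represents simr N (odds p) v.
Proof.
move=> bowtie_triangle; have [NP | _] := boolP (N \in blocks); last by exists (fun _ => 0).
have [_ _ nP0] := and3P partition_blocks.
have /set0Pn[x xN] : N != set0 by apply: contraNneq nP0 => <-.
have [y [z [xy [yz xz]]]] := bowtie_triangle x.
have inN u : rbowtie p x u -> u \in N.
  by move=> xu; rewrite (mem_block _ NP xN); apply/simeqrP; right.
have nsim u u' : rbowtie p u u' -> ~~ simr u u' by move=> [nuu' _]; apply/simrP.
have [v vP] := exists_represents Hsc simr_refl simr_sym simr_trans (simr_unaffected NP)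
  xN (inN _ xy) (inN _ xz) (nsim _ _ xy) (nsim _ _ yz) (nsim _ _ xz).
by exists v.
Qed.

Lemma global_weights :
  (exists a b c, ~ rsimeq p a b /\ ~ rsimeq p b c /\ ~ rsimeq p a c) ->
  exists w, represents simeqr [set: X] (odds p) w.
Proof.
move=> [a [b [c [nab [nbc nac]]]]].
have nsimeqr u v : ~ rsimeq p u v -> ~~ simeqr u v by move=> nuv; apply/simeqrP.
by have := exists_represents Hsc simeqr_refl simeqr_sym simeqr_trans simeqr_unaffected
  (in_setT a) (in_setT b) (in_setT c) (nsimeqr _ _ nab) (nsimeqr _ _ nbc) (nsimeqr _ _ nac).
Qed.

Section Glue.
Variable vB : {set X} -> {set X} -> R.
Hypothesis vBP : forall N, N \in blocks -> represents simr N (odds p) (vB N).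

Lemma glue_ge0 S : 0 <= glue blocks vB S.
Proof.
rewrite /glue; case: pickP => // z _.
by have [_ v_ge0 _ _] := vBP (pblock_blocks z); apply: v_ge0.
Qed.

Lemma represents_glue N : N \in blocks -> represents simr N (odds p) (glue blocks vB).
Proof.
move=> NP; have [_ tiP _] := and3P partition_blocks.
have gE S : homog simr N S -> glue blocks vB S = vB N S.
  by case=> S0 SN _; apply: glue_sub.
have [_ _ vpos vodds] := vBP NP; split.
- exact: glue_set0.
- exact: glue_ge0.
- by move=> S hS; rewrite gE //; apply: vpos.
- by move=> S T hS hT ST; rewrite !gE //; apply: vodds.
Qed.

End Glue.

Definition class_prob x := p x [set y | simr x y].

Lemma class_prob_gt0 x : 0 < class_prob x.
Proof. by rewrite p_gt0 // inE simr_refl. Qed.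

Lemma class_prob_sim x y A : x \in A -> y \in A -> simr x y ->
  class_prob y = class_prob x / p x A * p y A.
Proof.
move=> xA yA xy; rewrite /class_prob.
have -> : [set z | simr y z] = [set z | simr x z].
  apply/setP => z; rewrite !inE; apply/idP/idP; first exact: simr_trans.
  by apply: simr_trans; rewrite simr_sym.
set K := [set z | simr x z]; have xK : x \in K by rewrite inE simr_refl.
have yK : y \in K by rewrite inE.
have /simrP yx : simr y x by rewrite simr_sym.
rewrite -[p y K](divfK (p_neq0 Hsc xK)) (yx K yK xK) -(yx A yA xA).
by rewrite mulrC mulrA mulrAC.
Qed.

Lemma sum_class_prob x A S : x \in A -> S \subset A -> {in S, forall y, simr x y} ->
  \sum_(y in S) class_prob y = class_prob x / p x A * pmass p S A.
Proof.
move=> xA SA Sx; rewrite /pmass mulr_sumr; apply: eq_bigr => y yS.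
exact: class_prob_sim xA (subsetP SA _ yS) (Sx _ yS).
Qed.

Lemma nested_factorization w vB A x :
  represents simeqr [set: X] (odds p) w ->
  (forall N, N \in blocks -> represents simr N (odds p) (vB N)) ->
  A != set0 -> x \in A ->
  let N := pblock blocks x in let M := pblock (cells N) x in
  p x A = (class_prob x / \sum_(y in A :&: M) class_prob y) *
    (glue blocks vB (A :&: M) / \sum_(C in cells N) glue blocks vB (A :&: C)) *
    (w (A :&: N) / \sum_(B in blocks) w (A :&: B)).
Proof.
move=> wP vBP A0 xA N M; have NP : N \in blocks := pblock_blocks x.
have xN : x \in N by rewrite mem_pblock (cover_partition partition_blocks) inE.
have blockN := block_closed NP.
have cellsN := partition_cells N.
have xM : x \in M by rewrite mem_pblock (cover_partition cellsN).
have MP : M \in cells N by rewrite pblock_mem ?(cover_partition cellsN).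
have AM_sim : {in A :&: M, forall y, simr x y}.
  by move=> y /setIP[_ yM]; rewrite -(mem_class simr_refl simr_sym simr_trans blockN _ MP xM).
have first_stage := sum_class_prob xA (subsetIl A M) AM_sim.
have second_stage := represents_share Hsc simr_refl simr_sym simr_trans blockN
  (simr_unaffected NP) (represents_glue vBP NP) A0 xA xN.
have third_stage := represents_share Hsc simeqr_refl simeqr_sym simeqr_trans
  (fun _ _ _ _ => in_setT _) simeqr_unaffected wP A0 xA (in_setT x).
have mass1 : pmass p [set: X] A = 1.
  by rewrite -(pmass_setIl Hsc _ A0) setIT; have [_ []] := Hsc A0.
have mass_gt0 S : x \in S -> 0 < pmass p (A :&: S) A.
  by move=> xS; rewrite pmass_gt0 ?subsetIl //; apply/set0Pn; exists x; rewrite inE xA xS.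
have cx0 := lt0r_neq0 (class_prob_gt0 x).
have px0 := p_neq0 Hsc xA.
have mM0 := lt0r_neq0 (mass_gt0 M xM).
have mN0 := lt0r_neq0 (mass_gt0 N xN).
rewrite first_stage second_stage third_stage mass1 divr1 -(pmass_setIl Hsc N A0).
by field; rewrite mN0 px0 mM0 cx0.
Qed.

End NestedRepresentation.

Theorem theorem6 (R : realType) (X : finType) (p : X -> {set X} -> R) :
  stochastic_choice p ->
  (exists a b c : X, ~ rsimeq p a b /\ ~ rsimeq p b c /\ ~ rsimeq p a c) ->
  (forall x : X, exists y z : X,
      rbowtie p x y /\ rbowtie p y z /\ rbowtie p x z) ->
  GISA p -> CRS p ->
  NSC3 p.
Proof.
move=> Hsc abc bowtie_triangle HG HC.
have [w wP] := global_weights Hsc HG HC abc.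
have [vB vBP] := choice (fun N => block_weights Hsc HG HC N bowtie_triangle).
have [w_set0 w_ge0 _ _] := wP.
exists (blocks p), (cells p), (class_prob p), w, (glue (blocks p) vB).
split; first exact: partition_blocks.
split; first by move=> N _; apply: partition_cells.
split; first exact: class_prob_gt0.
split; first exact: w_ge0.
split; first exact: glue_ge0 vBP.
split; first exact: w_set0.
split; first exact: glue_set0.
by move=> A x A0 xA; apply: nested_factorization wP vBP A0 xA.
Qed.
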